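(* Let $n_0>3$ be a constant and consider on $u>0,q>0$ the system $$\frac{du}{d\xi}=u(3-u-n_0q),\qquad \frac{dq}{d\xi}=q(-1+u+q).$$ Define $$\Psi=(uq)^{\frac{2}{n_0-1}}\Big(\frac{n_0-5}{(n_0-1)^2}+\frac{2q}{n_0-1}-\frac{q^2}{2}-\frac{qu}{n_0+1}\Big).$$ Then along solutions $$\frac{d\Psi}{d\xi}=(n_0-5)(n_0-1)^{-3}(uq)^{\frac{2}{n_0-1}}\big((n_0-1)q-2\big)^2.$$ Consequently, for $n_0\neq5$, $\Psi$ is monotone along orbits and the only possible $\omega$-limit set (resp. $\alpha$-limit set) contained in the open quadrant $u,q>0$ is the fixed point $(u,q)=\big(\frac{n_0-3}{n_0-1},\frac{2}{n_0-1}\big)$.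
   Context: This is the equation system for the exact polytrope $\rho\propto\eta^{n_0}$, written in the homology invariants $u=4\pi r^3\rho/m$ and $q=m/(r\eta)$ with independent variable $\xi=\ln r$, where $\eta=\int_0^p dp'/\rho(p')$ and $dm/dr=4\pi r^2\rho$, $dp/dr=-m\rho/r^2$. *)

From Stdlib Require Import Reals.
From Coquelicot Require Import Coquelicot.
Open Scope R_scope.

Definition field_u (n0 u q : R) : R := u * (3 - u - n0 * q).
Definition field_q (u q : R) : R := q * (-1 + u + q).

Definition Psi (n0 u q : R) : R :=
  Rpower (u * q) (2 / (n0 - 1)) *
  ((n0 - 5) / (n0 - 1) ^ 2 + 2 * q / (n0 - 1) - q ^ 2 / 2 - q * u / (n0 + 1)).

Definition dPsi (n0 u q : R) : R :=
  (n0 - 5) / (n0 - 1) ^ 3 * Rpower (u * q) (2 / (n0 - 1)) * ((n0 - 1) * q - 2) ^ 2.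

Definition is_sol_on (n0 : R) (D : R -> Prop) (u q : R -> R) : Prop :=
  forall t, D t ->
    0 < u t /\ 0 < q t /\
    is_derive u t (field_u n0 (u t) (q t)) /\
    is_derive q t (field_q (u t) (q t)).

Definition omega_limit (u q : R -> R) (p : R * R) : Prop :=
  exists tk : nat -> R,
    is_lim_seq tk p_infty /\
    is_lim_seq (fun k => u (tk k)) (fst p) /\
    is_lim_seq (fun k => q (tk k)) (snd p).

Definition alpha_limit (u q : R -> R) (p : R * R) : Prop :=
  exists tk : nat -> R,
    is_lim_seq tk m_infty /\
    is_lim_seq (fun k => u (tk k)) (fst p) /\
    is_lim_seq (fun k => q (tk k)) (snd p).

Definition fixed_pt (n0 : R) : R * R := ((n0 - 3) / (n0 - 1), 2 / (n0 - 1)).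

From Stdlib Require Import Reals Lra Classical.
From Coquelicot Require Import Coquelicot.
Open Scope R_scope.

(* Along solutions, (n0 - 5) Psi is nondecreasing and its derivative vanishes only
   on the line q = 2/(n0-1).  Near any point p of the open quadrant other than the
   fixed point, every solution passing close enough to p gains a definite amount of
   (n0 - 5) Psi within a fixed time: either p is off that line and the solution stays
   away from it, or the flow crosses the line transversally at p and the solution
   leaves it.  If the solution tends to p along times t_k -> +oo (resp. -oo), then by
   monotonicity (n0 - 5) Psi stays below (resp. above) its value at p on the whole
   half-line, which such a gain contradicts. *)

Lemma is_derive_near_lt (f : R -> R) (x l c r : R) :
  is_derive f x l -> Rabs (f x - c) < r ->
  exists d, 0 < d /\ forall s, Rabs (s - x) < d -> Rabs (f s - c) < r.
Proof.
intros Df Hx.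
assert (Cf : continuity_pt f x).
{ apply continuity_pt_filterlim, (ex_derive_continuous f x). now exists l. }
destruct (Cf (r - Rabs (f x - c))) as [d [Hd Hnear]]; [lra|].
exists d; split; [exact Hd|]. intros s Hs.
destruct (Req_dec s x) as [->|Hne]; [exact Hx|].
assert (Hfs : Rabs (f s - f x) < r - Rabs (f x - c)).
{ apply (Hnear s). split; [split; [exact I|auto]|exact Hs]. }
replace (f s - c) with ((f s - f x) + (f x - c)) by ring.
eapply Rle_lt_trans; [apply Rabs_triang|lra].
Qed.

Lemma increment_ge_of_derive_ge (f df : R -> R) (a b m : R) : a <= b ->
  (forall x, a <= x <= b -> is_derive f x (df x)) ->
  (forall x, a < x < b -> m <= df x) -> f a + m * (b - a) <= f b.
Proof.
intros Hab Hd Hm.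
destruct (Req_dec a b) as [<-|Hne]; [lra|].
destruct (MVT_cor2 f df a b) as [c [Hc Hc2]]; [lra| |].
{ intros c Hc. apply is_derive_Reals, Hd; lra. }
specialize (Hm c Hc2). nra.
Qed.

Lemma increment_abs_le_of_derive_abs_le (f df : R -> R) (a b M : R) : a <= b ->
  (forall x, a <= x <= b -> is_derive f x (df x)) ->
  (forall x, a < x < b -> Rabs (df x) <= M) -> Rabs (f b - f a) <= M * (b - a).
Proof.
intros Hab Hd Hm.
destruct (Req_dec a b) as [<-|Hne].
{ rewrite Rminus_eq_0, Rabs_R0; lra. }
destruct (MVT_cor2 f df a b) as [c [Hc Hc2]]; [lra| |].
{ intros c Hc. apply is_derive_Reals, Hd; lra. }
rewrite Hc, Rabs_mult, (Rabs_right (b - a)) by lra.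
specialize (Hm c Hc2). nra.
Qed.

(* The supremum of the points up to which P holds can be neither below [b]
   (the right step pushes it further) nor fail to satisfy P (the left step). *)
Lemma real_induction (P : R -> Prop) (a b : R) :
  (forall x, a <= x <= b -> (forall s, a <= s < x -> P s) -> P x) ->
  (forall x, a <= x < b -> P x -> exists d, 0 < d /\ forall s, x < s < x + d -> P s) ->
  forall x, a <= x <= b -> P x.
Proof.
intros Hleft Hright x Hx.
set (E := fun y => a <= y <= b /\ forall s, a <= s <= y -> P s).
assert (Pa : P a) by (apply Hleft; [lra|intros s Hs; lra]).
destruct (completeness E) as [tau [Hub Hlub]].
{ exists b. intros y [Hy _]. lra. }
{ exists a. split; [lra|]. intros s Hs. now replace s with a by lra. }
assert (Hat : a <= tau).
{ apply Hub. split; [lra|]. intros s Hs. now replace s with a by lra. }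
assert (Htb : tau <= b) by (apply Hlub; intros y [Hy _]; lra).
assert (Hbelow : forall s, a <= s < tau -> P s).
{ intros s Hs. destruct (classic (P s)) as [Ps|nPs]; [exact Ps|].
  assert (tau <= s); [|lra].
  apply Hlub. intros y [Hy HPy]. destruct (Rle_or_lt y s) as [Hys|Hsy]; [exact Hys|].
  exfalso. apply nPs, HPy. lra. }
assert (Ptau : P tau) by (apply Hleft; [lra|exact Hbelow]).
assert (Htau : tau = b).
{ destruct (Rle_lt_or_eq_dec tau b Htb) as [Hlt|Heq]; [exfalso|exact Heq].
  destruct (Hright tau) as [d [Hd Hnear]]; [lra|exact Ptau|].
  set (y := Rmin b (tau + d / 2)).
  assert (Hy : tau < y /\ y <= b /\ y <= tau + d / 2).
  { unfold y. split; [apply Rmin_glb_lt; lra|split; [apply Rmin_l|apply Rmin_r]]. }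
  assert (y <= tau); [|lra].
  apply Hub. split; [lra|]. intros s Hs.
  destruct (Rlt_le_dec s tau) as [Hst|Hst]; [apply Hbelow; lra|].
  destruct (Req_dec s tau) as [->|Hne]; [exact Ptau|apply Hnear; lra]. }
destruct (Req_dec x tau) as [->|Hne]; [exact Ptau|apply Hbelow; lra].
Qed.

Lemma stays_in_box (u q du dq : R -> R) (pu pq r M a b : R) :
  0 <= M -> M * (b - a) < r / 2 ->
  (forall s, a <= s <= b -> is_derive u s (du s) /\ is_derive q s (dq s)) ->
  (forall s, a <= s <= b -> Rabs (u s - pu) < r -> Rabs (q s - pq) < r ->
     Rabs (du s) <= M /\ Rabs (dq s) <= M) ->
  Rabs (u a - pu) <= r / 2 -> Rabs (q a - pq) <= r / 2 ->
  forall s, a <= s <= b -> Rabs (u s - pu) < r /\ Rabs (q s - pq) < r.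
Proof.
intros HM Hsmall Hder Hbound Hua Hqa.
apply real_induction.
- intros x Hx Hbefore.
  assert (Hstep : forall (f df : R -> R) (p : R),
    (forall s, a <= s <= x -> is_derive f s (df s)) ->
    (forall s, a < s < x -> Rabs (df s) <= M) ->
    Rabs (f a - p) <= r / 2 -> Rabs (f x - p) < r).
  { intros f df p Df Hdf Hfa.
    assert (Hinc : Rabs (f x - f a) <= M * (x - a))
      by (apply (increment_abs_le_of_derive_abs_le f df); [lra|exact Df|exact Hdf]).
    assert (M * (x - a) <= M * (b - a)) by (apply Rmult_le_compat_l; lra).
    replace (f x - p) with ((f x - f a) + (f a - p)) by ring.
    eapply Rle_lt_trans; [apply Rabs_triang|lra]. }
  split.
  + apply (Hstep u du); [intros s Hs; apply Hder; lra| |exact Hua].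
    intros s Hs. destruct (Hbefore s) as [Bu Bq]; [lra|]. apply Hbound; [lra|exact Bu|exact Bq].
  + apply (Hstep q dq); [intros s Hs; apply Hder; lra| |exact Hqa].
    intros s Hs. destruct (Hbefore s) as [Bu Bq]; [lra|]. apply Hbound; [lra|exact Bu|exact Bq].
- intros x Hx [Bu Bq]. destruct (Hder x) as [Du Dq]; [lra|].
  destruct (is_derive_near_lt u x _ pu r Du Bu) as [d1 [Hd1 Nu]].
  destruct (is_derive_near_lt q x _ pq r Dq Bq) as [d2 [Hd2 Nq]].
  exists (Rmin d1 d2). split; [apply Rmin_glb_lt; lra|].
  intros s Hs. assert (Rmin d1 d2 <= d1 /\ Rmin d1 d2 <= d2) by (split; [apply Rmin_l|apply Rmin_r]).
  split; [apply Nu|apply Nq]; rewrite Rabs_right; lra.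
Qed.

Lemma drift_away_from_zero (g dg : R -> R) (t h al : R) : 0 < h -> 0 < al ->
  (forall s, t <= s <= t + h -> is_derive g s (dg s)) ->
  (forall s, t < s < t + h -> al <= dg s) ->
  exists a, t <= a /\ a + h / 4 <= t + h /\
    forall s, a <= s <= a + h / 4 -> al * h / 8 <= Rabs (g s).
Proof.
intros Hh Hal Hd Hdg.
assert (0 < al * h) by (apply Rmult_lt_0_compat; lra).
set (m := t + h / 2).
destruct (Rle_or_lt 0 (g m)) as [Hm|Hm].
- exists (t + 3 * h / 4). split; [lra|split; [lra|]].
  intros s Hs.
  assert (g m + al * (s - m) <= g s).
  { apply (increment_ge_of_derive_ge g dg); [unfold m; lra| |];
      intros x Hx; [apply Hd|apply Hdg]; unfold m in *; lra. }
  assert (al * (h / 4) <= al * (s - m)) by (apply Rmult_le_compat_l; unfold m; lra).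
  rewrite Rabs_right; lra.
- exists t. split; [lra|split; [lra|]].
  intros s Hs.
  assert (g s + al * (m - s) <= g m).
  { apply (increment_ge_of_derive_ge g dg); [unfold m; lra| |];
      intros x Hx; [apply Hd|apply Hdg]; unfold m in *; lra. }
  assert (al * (h / 4) <= al * (m - s)) by (apply Rmult_le_compat_l; unfold m; lra).
  rewrite Rabs_left; lra.
Qed.

Lemma increment_ge_of_derive_ge_sq (G dG g : R -> R) (t h a K eps : R) :
  0 <= K -> 0 <= eps -> t <= a -> a + h / 4 <= t + h ->
  (forall s, t <= s <= t + h -> is_derive G s (dG s)) ->
  (forall s, t <= s <= t + h -> K * g s ^ 2 <= dG s) ->
  (forall s, a <= s <= a + h / 4 -> eps <= Rabs (g s)) ->
  G t + K * eps ^ 2 * (h / 4) <= G (t + h).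
Proof.
intros HK Heps Hta Hah Hd Hlb Hfar.
assert (Hpos : forall s, t <= s <= t + h -> 0 <= dG s).
{ intros s Hs. eapply Rle_trans; [|apply Hlb, Hs].
  apply Rmult_le_pos; [exact HK|apply pow2_ge_0]. }
assert (E1 : G t + 0 * (a - t) <= G a).
{ apply (increment_ge_of_derive_ge G dG); [lra| |]; intros x Hx; [apply Hd|apply Hpos]; lra. }
assert (E2 : G a + K * eps ^ 2 * (a + h / 4 - a) <= G (a + h / 4)).
{ apply (increment_ge_of_derive_ge G dG); [lra| |]; intros x Hx; [apply Hd; lra|].
  eapply Rle_trans; [|apply Hlb; lra].
  apply Rmult_le_compat_l; [exact HK|].
  rewrite <- (pow2_abs (g x)). apply pow_incr. specialize (Hfar x ltac:(lra)). lra. }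
assert (E3 : G (a + h / 4) + 0 * (t + h - (a + h / 4)) <= G (t + h)).
{ apply (increment_ge_of_derive_ge G dG); [lra| |]; intros x Hx; [apply Hd|apply Hpos]; lra. }
lra.
Qed.
Lemma drift_away_from_zero_abs (g dg : R -> R) (t h a : R) : 0 < h -> a <> 0 ->
  (forall s, t <= s <= t + h -> is_derive g s (dg s)) ->
  (forall s, t < s < t + h -> Rabs (dg s - a) <= Rabs a / 2) ->
  exists b, t <= b /\ b + h / 4 <= t + h /\
    forall s, b <= s <= b + h / 4 -> Rabs a / 2 * h / 8 <= Rabs (g s).
Proof.
intros Hh Ha Hd Hclose.
assert (Hpos : 0 < Rabs a / 2) by (assert (0 < Rabs a) by (now apply Rabs_pos_lt); lra).
destruct (Rle_or_lt 0 a) as [Hap|Han].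
- apply (drift_away_from_zero g dg); [exact Hh|exact Hpos|exact Hd|].
  intros s Hs. specialize (Hclose s Hs). apply Rabs_le_between in Hclose.
  rewrite Rabs_right in * by lra. lra.
- destruct (drift_away_from_zero (fun s => - g s) (fun s => - dg s) t h (Rabs a / 2))
    as [b [Hb1 [Hb2 Hfar]]].
  + exact Hh.
  + exact Hpos.
  + intros s Hs. apply (is_derive_opp g), Hd, Hs.
  + intros s Hs. specialize (Hclose s Hs). apply Rabs_le_between in Hclose.
    rewrite Rabs_left in * by lra. lra.
  + exists b. split; [exact Hb1|split; [exact Hb2|]].
    intros s Hs. rewrite <- (Rabs_Ropp (g s)). apply Hfar, Hs.
Qed.

Lemma dPsi_signed (n0 u q : R) : 3 < n0 ->
  (n0 - 5) * dPsi n0 u q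
  = (n0 - 5) ^ 2 / (n0 - 1) * Rpower (u * q) (2 / (n0 - 1)) * (q - 2 / (n0 - 1)) ^ 2.
Proof. intros Hn0. unfold dPsi. field. lra. Qed.

Lemma dPsi_signed_ge (n0 u q m : R) : 3 < n0 -> 0 < m <= u * q ->
  (n0 - 5) ^ 2 / (n0 - 1) * Rpower m (2 / (n0 - 1)) * (q - 2 / (n0 - 1)) ^ 2
  <= (n0 - 5) * dPsi n0 u q.
Proof.
intros Hn0 Hm. rewrite dPsi_signed by exact Hn0.
apply Rmult_le_compat_r; [apply pow2_ge_0|].
apply Rmult_le_compat_l.
- apply Rmult_le_pos; [apply pow2_ge_0|]. apply Rlt_le, Rinv_0_lt_compat. lra.
- apply Rle_Rpower_l; [apply Rlt_le, Rdiv_lt_0_compat; lra|lra].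
Qed.

Lemma dPsi_signed_nonneg (n0 u q : R) : 3 < n0 -> 0 <= (n0 - 5) * dPsi n0 u q.
Proof.
intros Hn0. rewrite dPsi_signed by exact Hn0.
apply Rmult_le_pos; [|apply pow2_ge_0].
apply Rmult_le_pos; [|apply Rlt_le, exp_pos].
apply Rmult_le_pos; [apply pow2_ge_0|]. apply Rlt_le, Rinv_0_lt_compat. lra.
Qed.

Lemma field_abs_le (n0 u q U Q : R) : 0 <= n0 -> 0 <= u <= U -> 0 <= q <= Q ->
  Rabs (field_u n0 u q) <= U * (3 + U + n0 * Q) /\ Rabs (field_q u q) <= Q * (1 + U + Q).
Proof.
intros Hn0 Hu Hq. unfold field_u, field_q.
assert (0 <= n0 * q <= n0 * Q) by (split; [apply Rmult_le_pos|apply Rmult_le_compat_l]; lra).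
split; rewrite Rabs_mult, Rabs_right by lra;
  (apply Rmult_le_compat; [lra|apply Rabs_pos|lra|apply Rabs_le; lra]).
Qed.

Lemma field_q_lipschitz (u q pu pq r : R) : 0 <= pq -> 0 <= pu ->
  Rabs (u - pu) <= r -> Rabs (q - pq) <= r -> r <= 1 ->
  Rabs (field_q u q - field_q pu pq) <= r * (3 + pu + 3 * pq).
Proof.
intros Hpq Hpu Hu Hq Hr. unfold field_q.
apply Rabs_le_between in Hu. apply Rabs_le_between in Hq.
replace (q * (-1 + u + q) - pq * (-1 + pu + pq))
  with ((q - pq) * (-1 + u + q) + pq * ((u - pu) + (q - pq))) by ring.
apply Rabs_le. split; nra.
Qed.

Lemma Psi_is_derive (n0 : R) (D : R -> Prop) (u q : R -> R) (t : R) : 3 < n0 ->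
  is_sol_on n0 D u q -> D t ->
  is_derive (fun s => Psi n0 (u s) (q s)) t (dPsi n0 (u t) (q t)).
Proof.
intros Hn0 Hsol Dt. destruct (Hsol t Dt) as [Hu [Hq [Du Dq]]].
unfold Psi, Rpower.
auto_derive.
- repeat split; try (now exists (field_u n0 (u t) (q t))); try (now exists (field_q (u t) (q t))).
  apply Rmult_lt_0_compat; assumption.
- replace (Derive (fun x => u x) t) with (field_u n0 (u t) (q t))
    by (symmetry; now apply is_derive_unique).
  replace (Derive (fun x => q x) t) with (field_q (u t) (q t))
    by (symmetry; now apply is_derive_unique).
  unfold dPsi, Rpower, field_u, field_q. field. lra.
Qed.

Lemma Psi_signed_is_derive (n0 : R) (D : R -> Prop) (u q : R -> R) (t : R) : 3 < n0 ->
  is_sol_on n0 D u q -> D t ->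
  is_derive (fun s => (n0 - 5) * Psi n0 (u s) (q s)) t ((n0 - 5) * dPsi n0 (u t) (q t)).
Proof.
intros Hn0 Hsol Dt. apply (is_derive_scal (fun s => Psi n0 (u s) (q s))).
exact (Psi_is_derive n0 D u q t Hn0 Hsol Dt).
Qed.

Lemma Psi_signed_nondecreasing (n0 : R) (D : R -> Prop) (u q : R -> R) (s t : R) : 3 < n0 ->
  (forall a b c, D a -> D c -> a <= b <= c -> D b) ->
  is_sol_on n0 D u q -> D s -> D t -> s <= t ->
  (n0 - 5) * Psi n0 (u s) (q s) <= (n0 - 5) * Psi n0 (u t) (q t).
Proof.
intros Hn0 HD Hsol Ds Dt Hst.
cut ((n0 - 5) * Psi n0 (u s) (q s) + 0 * (t - s) <= (n0 - 5) * Psi n0 (u t) (q t)); [lra|].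
apply (increment_ge_of_derive_ge (fun x => (n0 - 5) * Psi n0 (u x) (q x))
  (fun x => (n0 - 5) * dPsi n0 (u x) (q x))); [exact Hst| |].
- intros x Hx. apply (Psi_signed_is_derive n0 D); [exact Hn0|exact Hsol|exact (HD s x t Ds Dt Hx)].
- intros x _. now apply dPsi_signed_nonneg.
Qed.

(* A bound for the vector field on the box [|u - pu| <= 1, |q - pq| <= 1] within the quadrant. *)
Definition box_speed (n0 pu pq : R) : R :=
  (pu + 1) * (3 + (pu + 1) + n0 * (pq + 1)) + (pq + 1) * (1 + (pu + 1) + (pq + 1)).

Lemma box_speed_pos (n0 pu pq : R) : 0 <= n0 -> 0 <= pu -> 0 <= pq -> 0 < box_speed n0 pu pq.
Proof.
intros Hn0 Hpu Hpq. unfold box_speed.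
assert (0 <= n0 * (pq + 1)) by (apply Rmult_le_pos; lra).
apply Rplus_le_lt_0_compat; [apply Rmult_le_pos|apply Rmult_lt_0_compat]; lra.
Qed.

Lemma solution_stays_in_box (n0 pu pq r h t : R) (u q : R -> R) :
  3 < n0 -> 0 <= pu -> 0 <= pq -> r <= 1 -> box_speed n0 pu pq * h < r / 2 ->
  Rabs (u t - pu) <= r / 2 -> Rabs (q t - pq) <= r / 2 ->
  is_sol_on n0 (fun s => t <= s <= t + h) u q ->
  forall s, t <= s <= t + h -> Rabs (u s - pu) < r /\ Rabs (q s - pq) < r.
Proof.
intros Hn0 Hpu Hpq Hr Hh Hut Hqt Hsol.
replace h with (t + h - t) in Hh by ring.
apply (stays_in_box u q (fun s => field_u n0 (u s) (q s)) (fun s => field_q (u s) (q s))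
  pu pq r (box_speed n0 pu pq)); try assumption.
- apply Rlt_le, box_speed_pos; lra.
- intros s Hs. destruct (Hsol s Hs) as [_ [_ Ds]]. exact Ds.
- intros s Hs Bu Bq. destruct (Hsol s Hs) as [Hu [Hq _]].
  apply Rabs_lt_between in Bu. apply Rabs_lt_between in Bq.
  destruct (field_abs_le n0 (u s) (q s) (pu + 1) (pq + 1)) as [Fu Fq]; [lra|lra|lra|].
  assert (0 <= n0 * (pq + 1)) by (apply Rmult_le_pos; lra).
  assert (0 <= (pu + 1) * (3 + (pu + 1) + n0 * (pq + 1))) by (apply Rmult_le_pos; lra).
  assert (0 <= (pq + 1) * (1 + (pu + 1) + (pq + 1))) by (apply Rmult_le_pos; lra).
  unfold box_speed. lra.
Qed.

(* Lower bound of (n0 - 5) dPsi / (q - 2/(n0-1))^2 where u >= pu/2 and q >= pq/2. *)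
Definition Psi_rate (n0 pu pq : R) : R :=
  (n0 - 5) ^ 2 / (n0 - 1) * Rpower (pu * pq / 4) (2 / (n0 - 1)).

Lemma Psi_rate_pos (n0 pu pq : R) : 3 < n0 -> n0 <> 5 -> 0 < Psi_rate n0 pu pq.
Proof.
intros Hn0 H5. unfold Psi_rate.
apply Rmult_lt_0_compat; [|apply exp_pos].
apply Rdiv_lt_0_compat; [apply pow2_gt_0|]; lra.
Qed.

Lemma Psi_signed_growth_in_box (n0 pu pq r h t : R) (u q : R -> R) :
  3 < n0 -> 0 < pu -> 0 < pq -> r <= 1 -> r <= pu / 2 -> r <= pq / 2 ->
  box_speed n0 pu pq * h < r / 2 ->
  Rabs (u t - pu) <= r / 2 -> Rabs (q t - pq) <= r / 2 ->
  is_sol_on n0 (fun s => t <= s <= t + h) u q ->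
  forall s, t <= s <= t + h ->
    Rabs (u s - pu) < r /\ Rabs (q s - pq) < r /\
    Psi_rate n0 pu pq * (q s - 2 / (n0 - 1)) ^ 2 <= (n0 - 5) * dPsi n0 (u s) (q s).
Proof.
intros Hn0 Hpu Hpq Hr1 Hru Hrq Hh Hut Hqt Hsol s Hs.
destruct (solution_stays_in_box n0 pu pq r h t u q) with (s := s) as [Bu Bq]; try (assumption || lra).
split; [exact Bu|split; [exact Bq|]].
apply dPsi_signed_ge; [exact Hn0|].
apply Rabs_lt_between in Bu. apply Rabs_lt_between in Bq.
split; [nra|].
replace (pu * pq / 4) with ((pu / 2) * (pq / 2)) by field.
apply Rmult_le_compat; lra.
Qed.

Definition Psi_increases_near (n0 pu pq : R) : Prop :=
  exists rho h delta, 0 < rho /\ 0 < h /\ 0 < delta /\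
    forall (u q : R -> R) (t : R),
      Rabs (u t - pu) <= rho -> Rabs (q t - pq) <= rho ->
      is_sol_on n0 (fun s => t <= s <= t + h) u q ->
      (n0 - 5) * Psi n0 (u t) (q t) + delta <= (n0 - 5) * Psi n0 (u (t + h)) (q (t + h)).

Lemma admissible_radius (a b c : R) : 0 < a -> 0 < b -> 0 < c ->
  exists r, 0 < r /\ r <= 1 /\ r <= a /\ r <= b /\ r <= c.
Proof.
intros Ha Hb Hc. exists (Rmin (Rmin 1 a) (Rmin b c)).
repeat split.
- repeat apply Rmin_glb_lt; lra.
- eapply Rle_trans; apply Rmin_l.
- eapply Rle_trans; [apply Rmin_l|apply Rmin_r].
- eapply Rle_trans; [apply Rmin_r|apply Rmin_l].
- eapply Rle_trans; apply Rmin_r.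
Qed.

Lemma box_time (n0 pu pq r : R) : 0 <= n0 -> 0 <= pu -> 0 <= pq -> 0 < r ->
  exists h, 0 < h /\ box_speed n0 pu pq * h < r / 2.
Proof.
intros Hn0 Hpu Hpq Hr. assert (HM := box_speed_pos n0 pu pq Hn0 Hpu Hpq).
exists (r / (4 * box_speed n0 pu pq)). split.
- apply Rdiv_lt_0_compat; lra.
- replace (box_speed n0 pu pq * (r / (4 * box_speed n0 pu pq))) with (r / 4) by (field; lra). lra.
Qed.

Lemma Psi_increases_near_off_nullcline (n0 pu pq : R) : 3 < n0 -> n0 <> 5 ->
  0 < pu -> 0 < pq -> pq <> 2 / (n0 - 1) -> Psi_increases_near n0 pu pq.
Proof.
intros Hn0 H5 Hpu Hpq Hoff. set (e := 2 / (n0 - 1)) in *.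
set (c := Rabs (pq - e) / 2).
assert (Hc : 0 < c) by (assert (0 < Rabs (pq - e)) by (apply Rabs_pos_lt; lra); unfold c; lra).
destruct (admissible_radius (pu / 2) (pq / 2) c) as [r [Hr [Hr1 [Hru [Hrq Hrc]]]]]; [lra|lra|exact Hc|].
destruct (box_time n0 pu pq r) as [h [Hh Hspeed]]; [lra|lra|lra|exact Hr|].
assert (HK := Psi_rate_pos n0 pu pq Hn0 H5).
exists (r / 2), h, (Psi_rate n0 pu pq * c ^ 2 * (h / 4)).
split; [lra|split; [exact Hh|split]].
{ apply Rmult_lt_0_compat; [apply Rmult_lt_0_compat; [exact HK|apply pow_lt, Hc]|lra]. }
intros u q t Hut Hqt Hsol.
assert (Hbox := Psi_signed_growth_in_box n0 pu pq r h t u q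
  Hn0 Hpu Hpq Hr1 Hru Hrq Hspeed Hut Hqt Hsol).
apply (increment_ge_of_derive_ge_sq (fun s => (n0 - 5) * Psi n0 (u s) (q s))
  (fun s => (n0 - 5) * dPsi n0 (u s) (q s)) (fun s => q s - e) t h t (Psi_rate n0 pu pq) c);
  [lra|lra|lra|lra| | |].
- intros s Hs. exact (Psi_signed_is_derive n0 _ u q s Hn0 Hsol Hs).
- intros s Hs. apply Hbox, Hs.
- intros s Hs. destruct (Hbox s) as [_ [Bq _]]; [lra|].
  assert (Htri : Rabs (pq - e) - Rabs (pq - q s) <= Rabs ((pq - e) - (pq - q s)))
    by apply Rabs_triang_inv.
  replace ((pq - e) - (pq - q s)) with (q s - e) in Htri by ring.
  rewrite (Rabs_minus_sym pq (q s)) in Htri. unfold c in *. lra.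
Qed.

Lemma Psi_increases_near_transversal (n0 pu pq : R) : 3 < n0 -> n0 <> 5 ->
  0 < pu -> 0 < pq -> field_q pu pq <> 0 -> Psi_increases_near n0 pu pq.
Proof.
intros Hn0 H5 Hpu Hpq Ha. set (e := 2 / (n0 - 1)). set (a := field_q pu pq) in *.
assert (Ha0 : 0 < Rabs a) by (apply Rabs_pos_lt, Ha).
set (c := Rabs a / (2 * (3 + pu + 3 * pq))).
assert (Hc : 0 < c) by (apply Rdiv_lt_0_compat; lra).
destruct (admissible_radius (pu / 2) (pq / 2) c) as [r [Hr [Hr1 [Hru [Hrq Hrc]]]]]; [lra|lra|exact Hc|].
destruct (box_time n0 pu pq r) as [h [Hh Hspeed]]; [lra|lra|lra|exact Hr|].
assert (HK := Psi_rate_pos n0 pu pq Hn0 H5).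
set (eps := Rabs a / 2 * h / 8).
assert (Heps : 0 < eps) by (unfold eps; apply Rmult_lt_0_compat; [apply Rmult_lt_0_compat|]; lra).
exists (r / 2), h, (Psi_rate n0 pu pq * eps ^ 2 * (h / 4)).
split; [lra|split; [exact Hh|split]].
{ apply Rmult_lt_0_compat; [apply Rmult_lt_0_compat; [exact HK|apply pow_lt, Heps]|lra]. }
intros u q t Hut Hqt Hsol.
assert (Hbox := Psi_signed_growth_in_box n0 pu pq r h t u q
  Hn0 Hpu Hpq Hr1 Hru Hrq Hspeed Hut Hqt Hsol).
destruct (drift_away_from_zero_abs (fun s => q s - e) (fun s => field_q (u s) (q s)) t h a)
  as [b [Hb1 [Hb2 Hfar]]]; [exact Hh|exact Ha| | |].
- intros s Hs. destruct (Hsol s Hs) as [_ [_ [_ Dq]]].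
  replace (field_q (u s) (q s)) with (minus (field_q (u s) (q s)) 0)
    by (unfold minus, plus, opp; simpl; ring).
  exact (is_derive_minus q (fun _ => e) s _ _ Dq (is_derive_const e s)).
- intros s Hs. destruct (Hbox s) as [Bu [Bq _]]; [lra|].
  assert (Hlip : Rabs (field_q (u s) (q s) - a) <= r * (3 + pu + 3 * pq))
    by (apply field_q_lipschitz; lra).
  assert (r * (3 + pu + 3 * pq) <= c * (3 + pu + 3 * pq)) by (apply Rmult_le_compat_r; lra).
  replace (c * (3 + pu + 3 * pq)) with (Rabs a / 2) in * by (unfold c; field; lra).
  lra.
- apply (increment_ge_of_derive_ge_sq (fun s => (n0 - 5) * Psi n0 (u s) (q s))
    (fun s => (n0 - 5) * dPsi n0 (u s) (q s)) (fun s => q s - e) t h b (Psi_rate n0 pu pq) eps);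
    [lra|lra|exact Hb1|exact Hb2| | |exact Hfar].
  + intros s Hs. exact (Psi_signed_is_derive n0 _ u q s Hn0 Hsol Hs).
  + intros s Hs. apply Hbox, Hs.
Qed.

Lemma fixed_pt_of_nullclines (n0 pu pq : R) : 3 < n0 -> 0 < pq ->
  pq = 2 / (n0 - 1) -> field_q pu pq = 0 -> (pu, pq) = fixed_pt n0.
Proof.
intros Hn0 Hpq Hq Hf. unfold field_q in Hf. unfold fixed_pt. f_equal; [|exact Hq].
assert (Hsum : -1 + pu + pq = 0) by (destruct (Rmult_integral _ _ Hf); lra).
replace pu with (1 - pq) by lra. rewrite Hq. field. lra.
Qed.

Lemma Psi_increases_near_nonfixed (n0 pu pq : R) : 3 < n0 -> n0 <> 5 ->
  0 < pu -> 0 < pq -> (pu, pq) <> fixed_pt n0 -> Psi_increases_near n0 pu pq.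
Proof.
intros Hn0 H5 Hpu Hpq Hfix.
destruct (Req_dec pq (2 / (n0 - 1))) as [Hq|Hq].
- apply Psi_increases_near_transversal; try assumption.
  intros Hf. exact (Hfix (fixed_pt_of_nullclines n0 pu pq Hn0 Hpq Hq Hf)).
- now apply Psi_increases_near_off_nullcline.
Qed.

Lemma is_lim_seq_Psi (n0 : R) (x y : nat -> R) (pu pq : R) : 0 < pu -> 0 < pq ->
  is_lim_seq x pu -> is_lim_seq y pq ->
  is_lim_seq (fun k => (n0 - 5) * Psi n0 (x k) (y k)) ((n0 - 5) * Psi n0 pu pq).
Proof.
intros Hpu Hpq Hx Hy. apply (is_lim_seq_scal_l _ (n0 - 5) (Psi n0 pu pq)). unfold Psi.
assert (Hc : forall c, is_lim_seq (fun _ => c) c) by (intros; apply is_lim_seq_const).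
assert (Hy2 : is_lim_seq (fun k => y k ^ 2) (pq ^ 2)).
{ replace (pq ^ 2) with (pq * pq) by ring.
  apply (is_lim_seq_ext (fun k => y k * y k)); [intros; ring|now apply is_lim_seq_mult']. }
apply is_lim_seq_mult'.
- apply (is_lim_seq_continuous (fun w => Rpower w (2 / (n0 - 1))) (fun k => x k * y k)).
  + apply derivable_continuous_pt.
    exists (2 / (n0 - 1) * Rpower (pu * pq) (2 / (n0 - 1) - 1)).
    apply derivable_pt_lim_power, Rmult_lt_0_compat; assumption.
  + now apply is_lim_seq_mult'.
- apply is_lim_seq_minus'; [apply is_lim_seq_minus'; [apply is_lim_seq_plus'|]|].
  + apply Hc.
  + apply (is_lim_seq_mult' _ (fun _ => / (n0 - 1))); [apply is_lim_seq_mult'|]; auto.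
  + apply (is_lim_seq_mult' _ (fun _ => / 2)); auto.
  + apply (is_lim_seq_mult' _ (fun _ => / (n0 + 1))); [apply is_lim_seq_mult'|]; auto.
Qed.

Lemma le_lim_of_nondecreasing_pinfty (G : R -> R) (t0 L : R) (tk : nat -> R) :
  (forall s t, t0 <= s -> s <= t -> G s <= G t) ->
  is_lim_seq tk p_infty -> is_lim_seq (fun k => G (tk k)) L ->
  forall t, t0 <= t -> G t <= L.
Proof.
intros Hmono Htk HG t Ht.
apply (is_lim_seq_le_loc (fun _ => G t) (fun k => G (tk k)) (G t) L);
  [|apply is_lim_seq_const|exact HG].
destruct (proj2 (is_lim_seq_spec _ _) Htk t) as [N HN].
exists N. intros k Hk. apply Hmono; [exact Ht|apply Rlt_le, HN, Hk].
Qed.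

Lemma lim_le_of_nondecreasing_minfty (G : R -> R) (t0 L : R) (tk : nat -> R) :
  (forall s t, s <= t -> t <= t0 -> G s <= G t) ->
  is_lim_seq tk m_infty -> is_lim_seq (fun k => G (tk k)) L ->
  forall t, t <= t0 -> L <= G t.
Proof.
intros Hmono Htk HG t Ht.
apply (is_lim_seq_le_loc (fun k => G (tk k)) (fun _ => G t) L (G t));
  [|exact HG|apply is_lim_seq_const].
destruct (proj2 (is_lim_seq_spec _ _) Htk t) as [N HN].
exists N. intros k Hk. apply Hmono; [apply Rlt_le, HN, Hk|exact Ht].
Qed.

Lemma omega_limit_fixed_pt (n0 t0 : R) (u q : R -> R) (p : R * R) : 3 < n0 -> n0 <> 5 ->
  is_sol_on n0 (fun t => t0 <= t) u q -> 0 < fst p -> 0 < snd p ->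
  omega_limit u q p -> p = fixed_pt n0.
Proof.
intros Hn0 H5 Hsol Hpu Hpq [tk [Htk [Hu Hq]]].
destruct (classic (p = fixed_pt n0)) as [Hfix|Hnfix]; [exact Hfix|exfalso].
destruct p as [pu pq]; simpl in *.
destruct (Psi_increases_near_nonfixed n0 pu pq Hn0 H5 Hpu Hpq Hnfix)
  as [rho [h [delta [Hrho [Hh [Hdelta Hinc]]]]]].
set (G := fun t => (n0 - 5) * Psi n0 (u t) (q t)).
set (L := (n0 - 5) * Psi n0 pu pq).
assert (HG : is_lim_seq (fun k => G (tk k)) L) by now apply is_lim_seq_Psi.
assert (Hbound : forall t, t0 <= t -> G t <= L).
{ apply (le_lim_of_nondecreasing_pinfty G t0 L tk); [|exact Htk|exact HG].
  intros s t Hs Hst. apply (Psi_signed_nondecreasing n0 (fun t => t0 <= t)); try assumption; intros; lra. }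
assert (Hev : eventually (fun k => (Rabs (u (tk k) - pu) < rho /\ Rabs (q (tk k) - pq) < rho) /\
                                   (Rabs (G (tk k) - L) < delta /\ t0 < tk k))).
{ repeat apply filter_and.
  - exact (proj2 (is_lim_seq_spec _ _) Hu (mkposreal rho Hrho)).
  - exact (proj2 (is_lim_seq_spec _ _) Hq (mkposreal rho Hrho)).
  - exact (proj2 (is_lim_seq_spec _ _) HG (mkposreal delta Hdelta)).
  - exact (proj2 (is_lim_seq_spec _ _) Htk t0). }
destruct (filter_ex _ Hev) as [k [[Hnu Hnq] [HGk Htk0]]].
assert (Hstep : G (tk k) + delta <= G (tk k + h)).
{ apply Hinc; [lra|lra|]. intros s Hs. apply Hsol. lra. }
assert (G (tk k + h) <= L) by (apply Hbound; lra).
apply Rabs_lt_between in HGk. lra.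
Qed.

Lemma alpha_limit_fixed_pt (n0 t0 : R) (u q : R -> R) (p : R * R) : 3 < n0 -> n0 <> 5 ->
  is_sol_on n0 (fun t => t <= t0) u q -> 0 < fst p -> 0 < snd p ->
  alpha_limit u q p -> p = fixed_pt n0.
Proof.
intros Hn0 H5 Hsol Hpu Hpq [tk [Htk [Hu Hq]]].
destruct (classic (p = fixed_pt n0)) as [Hfix|Hnfix]; [exact Hfix|exfalso].
destruct p as [pu pq]; simpl in *.
destruct (Psi_increases_near_nonfixed n0 pu pq Hn0 H5 Hpu Hpq Hnfix)
  as [rho [h [delta [Hrho [Hh [Hdelta Hinc]]]]]].
set (G := fun t => (n0 - 5) * Psi n0 (u t) (q t)).
set (L := (n0 - 5) * Psi n0 pu pq).
assert (HG : is_lim_seq (fun k => G (tk k)) L) by now apply is_lim_seq_Psi.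
assert (Hmono : forall s t, s <= t -> t <= t0 -> G s <= G t).
{ intros s t Hst Ht. apply (Psi_signed_nondecreasing n0 (fun t => t <= t0)); try assumption; intros; lra. }
assert (Hbound := lim_le_of_nondecreasing_minfty G t0 L tk Hmono Htk HG).
assert (Hev' : eventually (fun k => Rabs (G (tk k) - L) < delta /\ tk k < t0)).
{ apply filter_and.
  - exact (proj2 (is_lim_seq_spec _ _) HG (mkposreal delta Hdelta)).
  - exact (proj2 (is_lim_seq_spec _ _) Htk t0). }
destruct (filter_ex _ Hev') as [k' [HGk' Htk']].
assert (Hev : eventually (fun k => (Rabs (u (tk k) - pu) < rho /\ Rabs (q (tk k) - pq) < rho) /\
                                   tk k < tk k' - h)).
{ repeat apply filter_and.
  - exact (proj2 (is_lim_seq_spec _ _) Hu (mkposreal rho Hrho)).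
  - exact (proj2 (is_lim_seq_spec _ _) Hq (mkposreal rho Hrho)).
  - exact (proj2 (is_lim_seq_spec _ _) Htk (tk k' - h)). }
destruct (filter_ex _ Hev) as [k [[Hnu Hnq] Hkk']].
assert (Hstep : G (tk k) + delta <= G (tk k + h)).
{ apply Hinc; [lra|lra|]. intros s Hs. apply Hsol. lra. }
assert (G (tk k + h) <= G (tk k')) by (apply Hmono; lra).
assert (L <= G (tk k)) by (apply Hbound; lra).
apply Rabs_lt_between in HGk'. lra.
Qed.

Lemma unique_element_iff {A : Type} (S : A -> Prop) (x : A) :
  (exists p, S p) -> (forall p, S p -> p = x) -> forall p, S p <-> p = x.
Proof. intros [p0 Hp0] Huniq p. split; [apply Huniq|intros ->]. now rewrite <- (Huniq p0). Qed.

Theorem mainTheorem10 (n0 : R) (Hn0 : 3 < n0) :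
  (forall (u q : R -> R) (t : R),
     is_sol_on n0 (fun s => s = t) u q ->
     is_derive (fun s => Psi n0 (u s) (q s)) t (dPsi n0 (u t) (q t)))
  /\
  (n0 <> 5 ->
     (forall (D : R -> Prop) (u q : R -> R),
        (forall a b c, D a -> D c -> a <= b <= c -> D b) ->
        is_sol_on n0 D u q ->
        forall s t, D s -> D t -> s <= t ->
          (5 < n0 -> Psi n0 (u s) (q s) <= Psi n0 (u t) (q t)) /\
          (n0 < 5 -> Psi n0 (u t) (q t) <= Psi n0 (u s) (q s)))
     /\
     (forall (t0 : R) (u q : R -> R),
        is_sol_on n0 (fun t => t0 <= t) u q ->
        (exists p, omega_limit u q p) ->
        (forall p, omega_limit u q p -> 0 < fst p /\ 0 < snd p) ->
        forall p, omega_limit u q p <-> p = fixed_pt n0)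
     /\
     (forall (t0 : R) (u q : R -> R),
        is_sol_on n0 (fun t => t <= t0) u q ->
        (exists p, alpha_limit u q p) ->
        (forall p, alpha_limit u q p -> 0 < fst p /\ 0 < snd p) ->
        forall p, alpha_limit u q p <-> p = fixed_pt n0)).
Proof.
split.
{ intros u q t Hsol. exact (Psi_is_derive n0 _ u q t Hn0 Hsol eq_refl). }
intros H5. split; [|split].
- intros D u q HD Hsol s t Ds Dt Hst.
  assert (Hmono := Psi_signed_nondecreasing n0 D u q s t Hn0 HD Hsol Ds Dt Hst).
  split; intros Hc; [apply (Rmult_le_reg_l (n0 - 5))|apply (Rmult_le_reg_l (5 - n0))]; lra.
- intros t0 u q Hsol Hex Hin. apply unique_element_iff; [exact Hex|].
  intros p Hp. destruct (Hin p Hp). now apply (omega_limit_fixed_pt n0 t0 u q).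
- intros t0 u q Hsol Hex Hin. apply unique_element_iff; [exact Hex|].
  intros p Hp. destruct (Hin p Hp). now apply (alpha_limit_fixed_pt n0 t0 u q).
Qed.
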